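(* Let $n,m,k$ be positive integers and consider variables $x_0,\dots,x_n$, $y_0,\dots,y_n$, $z_0,\dots,z_m$, $t_0,\dots,t_m$. Define the $k\times(n+k)$ matrices $f_1,f_2$, the $k\times(m+k)$ matrices $f_3,f_4$, the $(n+k)\times k$ matrices $g_1,g_2$ and the $(m+k)\times k$ matrices $g_3,g_4$ by $(f_1)_{i,j}=y_{n+k+1-i-j}$, $(f_2)_{i,j}=x_{n+k+1-i-j}$ if $0\le n+k+1-i-j\le n$ and $0$ otherwise; $(f_3)_{i,j}=t_{m+k+1-i-j}$, $(f_4)_{i,j}=z_{m+k+1-i-j}$ if $0\le m+k+1-i-j\le m$ and $0$ otherwise; $(g_1)_{r,j}=x_{r-j}$, $(g_2)_{r,j}=y_{r-j}$ if $0\le r-j\le n$ and $0$ otherwise; $(g_3)_{r,j}=z_{r-j}$, $(g_4)_{r,j}=t_{r-j}$ if $0\le r-j\le m$ and $0$ otherwise. (So, e.g., the last row of $f_1$ is $(y_n,\dots,y_0,0,\dots,0)$, its first row is $(0,\dots,0,y_n,\dots,y_0)$, and the $j$-th column of $g_1$ has $x_0,\dots,x_n$ in rows $j,\dots,j+n$.) Let $f=\begin{bmatrix} f_1 & -f_2 & f_3 & -f_4\end{bmatrix}$ (a $k\times(2n+2m+4k)$ matrix) and $g=\begin{bmatrix} g_1\\ g_2\\ g_3\\ g_4\end{bmatrix}$ (a $(2n+2m+4k)\times k$ matrix). Then (i) $f\cdot g=0$, and (ii) $f$ and $g$ have maximal rank $k$ whenever the variables are evaluated at a point where not all of $x_0,\dots,x_n$,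 $y_0,\dots,y_n$, $z_0,\dots,z_m$, $t_0,\dots,t_m$ vanish (in particular at every point of $\mathbb{P}^n\times\mathbb{P}^n\times\mathbb{P}^m\times\mathbb{P}^m$ with these homogeneous coordinates).
   Context: Here $x_i$, $y_i$ are homogeneous coordinates on the first and second factor $\mathbb{P}^n$, and $z_i$, $t_i$ on the third and fourth factor $\mathbb{P}^m$, of $\mathbb{P}^n\times\mathbb{P}^n\times\mathbb{P}^m\times\mathbb{P}^m$. ''Maximal rank'' means the rank equals $\min$ of the number of rows and columns, here $k$. *)

From HB Require Import structures.
From mathcomp Require Import all_boot all_order all_algebra.
Set Implicit Arguments. Unset Strict Implicit. Unset Printing Implicit Defensive.
Import Order.TTheory GRing.Theory Num.Theory.
Local Open Scope ring_scope.

Definition cf (R : comNzRingType) (n : nat) (a : 'I_n.+1 -> R) (d : int) : R :=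
  if (0 <= d) && (d <= n%:Z) then a (inord `|d|%N) else 0.

(* Indices below are 0-based: row i' = i-1, column j' = j-1 of the paper.
   Paper: (F)_{i,j} = a_{p+k+1-i-j} = a_{p+k-1-i'-j'}. *)
Definition fblock (R : comNzRingType) (p k : nat) (a : 'I_p.+1 -> R)
  : 'M[R]_(k, p + k) :=
  \matrix_(i < k, j < p + k) cf a ((p + k)%:Z - 1 - i%:Z - j%:Z).

Definition gblock (R : comNzRingType) (p k : nat) (a : 'I_p.+1 -> R)
  : 'M[R]_(p + k, k) :=
  \matrix_(r < p + k, j < k) cf a (r%:Z - j%:Z).

Definition fmat (R : comNzRingType) (n m k : nat)
  (x y : 'I_n.+1 -> R) (z t : 'I_m.+1 -> R)
  : 'M[R]_(k, (n + k) + (n + k) + (m + k) + (m + k)) :=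
  row_mx (row_mx (row_mx (fblock k y) (- fblock k x)) (fblock k t)) (- fblock k z).

Definition gmat (R : comNzRingType) (n m k : nat)
  (x y : 'I_n.+1 -> R) (z t : 'I_m.+1 -> R)
  : 'M[R]_((n + k) + (n + k) + (m + k) + (m + k), k) :=
  col_mx (col_mx (col_mx (gblock k x) (gblock k y)) (gblock k z)) (gblock k t).

(* Writing a(X) for the polynomial with coefficient vector a, the entry
   (i, l) of fblock a * gblock b is the coefficient of X^(p+k-1-i-l) in
   a(X) b(X).  This is symmetric in a and b, so the four products in f g
   cancel in pairs.  If a_j is the first nonzero coordinate of a, the rows
   j, ..., j+k-1 of gblock a form a lower triangular matrix with diagonal a_j,
   so gblock a has rank k; and fblock a is the transpose of gblock a with its
   columns reversed. *)
From HB Require Import structures.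
From mathcomp Require Import all_boot all_order all_algebra.
From mathcomp Require Import zify.
Set Implicit Arguments. Unset Strict Implicit. Unset Printing Implicit Defensive.
Import Order.TTheory GRing.Theory Num.Theory.
Local Open Scope ring_scope.

Section Coefficients.
Variables (R : comNzRingType) (p : nat) (a : 'I_p.+1 -> R).

Lemma cf_ord (i : 'I_p.+1) : cf a i%:Z = a i.
Proof. by rewrite /cf lez_nat -ltnS ltn_ord inord_val. Qed.

Lemma cf_nat (e : nat) : cf a e%:Z = if (e <= p)%N then a (inord e) else 0.
Proof. by rewrite /cf lez_nat. Qed.

Lemma cf_neg (d : int) : d < 0 -> cf a d = 0.
Proof. by move=> d_lt0; rewrite /cf lt_geF. Qed.

Lemma cf_eq0_below (j : nat) (d : int) :
  (forall i : 'I_p.+1, (i < j)%N -> a i = 0) -> d < j%:Z -> cf a d = 0.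
Proof.
case: d => e a0 ltej; last exact: cf_neg.
by rewrite cf_nat; case: ifP => // le_ep; apply: a0; rewrite inordK; lia.
Qed.

Lemma cf_sum (d : int) : cf a d = \sum_(s < p.+1) (d == s%:Z)%:R * a s.
Proof.
have [d_lt0 | d_ge0] := ltP d 0.
  by rewrite cf_neg // big1 // => s _; rewrite (_ : d == s = false) ?mul0r //; lia.
case: d d_ge0 => // e _; rewrite cf_nat; case: leqP => [le_ep | lt_pe].
  rewrite (bigD1 (inord e)) //= inordK // eqxx mul1r big1 ?addr0 // => s /eqP neq_s.
  rewrite (_ : _ == _ = false) ?mul0r //; apply/eqP => -[es]; apply: neq_s.
  by apply: val_inj; rewrite /= inordK.
by rewrite big1 // => s _; rewrite (_ : _ == _ = false) ?mul0r //; have := ltn_ord s; lia.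
Qed.

End Coefficients.

Section Convolution.
Variables (R : comNzRingType) (p k : nat).

Definition conv (a b : 'I_p.+1 -> R) (d : int) : R :=
  \sum_(s < p.+1) \sum_(u < p.+1) (s%:Z + u%:Z == d)%:R * (a s * b u).

Lemma convC (a b : 'I_p.+1 -> R) d : conv a b d = conv b a d.
Proof.
rewrite /conv exchange_big; apply: eq_bigr => u _; apply: eq_bigr => s _.
by rewrite [s%:Z + _]addrC [a s * _]mulrC.
Qed.

Lemma fblock_mul_gblock (a b : 'I_p.+1 -> R) :
  fblock k a *m gblock k b =
  \matrix_(i < k, l < k) conv a b ((p + k)%:Z - 1 - i%:Z - l%:Z).
Proof.
apply/matrixP => i l; rewrite !mxE /conv.
under eq_bigr => r _ do rewrite !mxE !cf_sum big_distrl.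
rewrite exchange_big; apply: eq_bigr => s _ /=.
under eq_bigr => r _ do rewrite big_distrr.
rewrite exchange_big; apply: eq_bigr => u _ /=.
have lt_ul : (u + l < p + k)%N by have := ltn_ord u; have := ltn_ord l; lia.
(* only the row r = u + l contributes *)
rewrite (bigD1 (Ordinal lt_ul)) //= big1 => [|r /eqP neq_r]; last first.
  case: (eqVneq (r%:Z - l%:Z) u) => [eq_r|]; last by rewrite mul0r mulr0.
  by case: neq_r; apply: val_inj => /=; lia.
rewrite (_ : _ - l%:Z == u%:Z) ?mul1r ?addr0; last by apply/eqP; lia.
have -> : ((p + k)%:Z - 1 - i%:Z - (u + l)%N%:Z == s%:Z) =
          (s%:Z + u%:Z == (p + k)%:Z - 1 - i%:Z - l%:Z) by apply/eqP/eqP; lia.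
by rewrite mulrA.
Qed.

Lemma fblock_mul_gblockC (a b : 'I_p.+1 -> R) :
  fblock k a *m gblock k b = fblock k b *m gblock k a.
Proof.
by rewrite !fblock_mul_gblock; apply/matrixP => i l; rewrite !mxE convC.
Qed.

End Convolution.

Section Rank.
Variable F : fieldType.

Lemma mxrank_colsub_le m n n' (g : 'I_n' -> 'I_n) (A : 'M[F]_(m, n)) :
  (\rank (colsub g A) <= \rank A)%N.
Proof.
have -> : colsub g A = A *m colsub g 1%:M by rewrite mulmx_colsub mulmx1.
exact: mxrankM_maxl.
Qed.

Lemma row_free_opp m n (A : 'M[F]_(m, n)) : row_free (- A) = row_free A.
Proof. by rewrite /row_free mxrank_opp. Qed.

Lemma row_full_col_mxu m1 m2 n (A : 'M[F]_(m1, n)) (B : 'M[F]_(m2, n)) :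
  row_full A -> row_full (col_mx A B).
Proof.
by rewrite -!col_leq_rank => /leq_trans; apply; rewrite -addsmxE mxrankS ?addsmxSl.
Qed.

Lemma row_full_col_mxd m1 m2 n (A : 'M[F]_(m1, n)) (B : 'M[F]_(m2, n)) :
  row_full B -> row_full (col_mx A B).
Proof.
by rewrite -!col_leq_rank => /leq_trans; apply; rewrite -addsmxE mxrankS ?addsmxSr.
Qed.

Lemma row_free_row_mxl m n1 n2 (A : 'M[F]_(m, n1)) (B : 'M[F]_(m, n2)) :
  row_free A -> row_free (row_mx A B).
Proof.
rewrite -!row_leq_rank => /leq_trans; apply.
rewrite -[\rank (row_mx A B)]mxrank_tr -[\rank A]mxrank_tr tr_row_mx.
by rewrite -addsmxE mxrankS ?addsmxSl.
Qed.

Lemma row_free_row_mxr m n1 n2 (A : 'M[F]_(m, n1)) (B : 'M[F]_(m, n2)) :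
  row_free B -> row_free (row_mx A B).
Proof.
rewrite -!row_leq_rank => /leq_trans; apply.
rewrite -[\rank (row_mx A B)]mxrank_tr -[\rank B]mxrank_tr tr_row_mx.
by rewrite -addsmxE mxrankS ?addsmxSr.
Qed.

Lemma mxrank_trig n (T : 'M[F]_n) :
  is_trig_mx T -> (forall i, T i i != 0) -> \rank T = n.
Proof.
move=> T_trig T_diag; apply: mxrank_unit.
by rewrite unitmxE (det_trig T_trig) unitfE; apply/prodf_neq0 => i _.
Qed.

End Rank.

Lemma fblockE (R : comNzRingType) p k (a : 'I_p.+1 -> R) :
  fblock k a = colsub (@rev_ord _) (gblock k a)^T.
Proof.
by apply/matrixP => i j; rewrite !mxE /=; congr (cf a _); have := ltn_ord j; lia.
Qed.

Section BlockRank.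
Variables (F : fieldType) (p k : nat) (a : 'I_p.+1 -> F).
Hypothesis a_neq0 : exists i, a i != 0.

Lemma mxrank_gblock : \rank (gblock k a) = k.
Proof.
have [i0 a_i0] := a_neq0.
case: (@arg_minnP _ i0 (fun i => a i != 0) val a_i0) => j a_j j_min.
have below_j (i : 'I_p.+1) : (i < j)%N -> a i = 0.
  by move=> lt_ij; apply/eqP; apply: contraTT lt_ij => /j_min; rewrite -leqNgt.
have lt_jc (c : 'I_k) : (j + c < p + k)%N by have := ltn_ord j; have := ltn_ord c; lia.
pose T := rowsub (fun c => Ordinal (lt_jc c)) (gblock k a).
have T_trig : is_trig_mx T.
  apply/is_trig_mxP => r c lt_rc; rewrite !mxE /=.
  by apply: (cf_eq0_below below_j); lia.
have T_diag c : T c c != 0.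
  by rewrite !mxE /= (_ : _ - _ = j%:Z) ?cf_ord //; lia.
apply/eqP; rewrite eqn_leq rank_leq_col -{1}(mxrank_trig T_trig T_diag).
exact/mxrankS/rowsub_sub.
Qed.

Lemma mxrank_fblock : \rank (fblock k a) = k.
Proof.
rewrite fblockE -[RHS]mxrank_gblock -[\rank (gblock k a)]mxrank_tr.
apply/eqP; rewrite eqn_leq mxrank_colsub_le /=.
set G := (gblock k a)^T.
have {1}-> : G = colsub (@rev_ord _) (colsub (@rev_ord _) G).
  by apply/matrixP => i j; rewrite !mxE rev_ordK.
exact: mxrank_colsub_le.
Qed.

Lemma row_full_gblock : row_full (gblock k a).
Proof. exact/eqP/mxrank_gblock. Qed.

Lemma row_free_fblock : row_free (fblock k a).
Proof. exact/eqP/mxrank_fblock. Qed.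

End BlockRank.

Lemma fmat_mul_gmat (R : comNzRingType) n m k
    (x y : 'I_n.+1 -> R) (z t : 'I_m.+1 -> R) :
  fmat k x y z t *m gmat k x y z t = 0.
Proof.
rewrite /fmat /gmat !mul_row_col !mulNmx.
by rewrite (fblock_mul_gblockC k x y) (fblock_mul_gblockC k z t) subrr add0r subrr.
Qed.

Section FullRank.
Variables (F : fieldType) (n m k : nat) (x y : 'I_n.+1 -> F) (z t : 'I_m.+1 -> F).
Hypothesis xyzt_neq0 : (exists i, x i != 0) \/ (exists i, y i != 0) \/
                       (exists i, z i != 0) \/ (exists i, t i != 0).

Lemma row_free_fmat : row_free (fmat k x y z t).
Proof.
case: xyzt_neq0 => [|[|[|]]] /(row_free_fblock k).
- by rewrite -row_free_opp => ?; do 2 apply: row_free_row_mxl; apply: row_free_row_mxr.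
- by move=> ?; do 3 apply: row_free_row_mxl.
- by rewrite -row_free_opp => ?; apply: row_free_row_mxr.
- by move=> ?; apply: row_free_row_mxl; apply: row_free_row_mxr.
Qed.

Lemma row_full_gmat : row_full (gmat k x y z t).
Proof.
case: xyzt_neq0 => [|[|[|]]] /(row_full_gblock k).
- by move=> ?; do 3 apply: row_full_col_mxu.
- by move=> ?; do 2 apply: row_full_col_mxu; apply: row_full_col_mxd.
- by move=> ?; apply: row_full_col_mxu; apply: row_full_col_mxd.
- by move=> ?; apply: row_full_col_mxd.
Qed.

End FullRank.

Theorem lemma4p1 (n m k : nat) (hn : (0 < n)%N) (hm : (0 < m)%N) (hk : (0 < k)%N) :
  (* (i) f * g = 0 identically: over every commutative ring (in particular
     the polynomial ring in the variables) *)
  (forall (R : comNzRingType) (x y : 'I_n.+1 -> R) (z t : 'I_m.+1 -> R),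
      fmat k x y z t *m gmat k x y z t = 0)
  /\
  (* (ii) maximal rank k at every point with not all coordinates zero *)
  (forall (F : fieldType) (x y : 'I_n.+1 -> F) (z t : 'I_m.+1 -> F),
      ((exists i, x i != 0) \/ (exists i, y i != 0) \/
       (exists i, z i != 0) \/ (exists i, t i != 0)) ->
      \rank (fmat k x y z t) = k /\ \rank (gmat k x y z t) = k).
Proof.
split=> [R x y z t | F x y z t xyzt_neq0]; first exact: fmat_mul_gmat.
by split; apply/eqP; [apply: row_free_fmat | apply: row_full_gmat].
Qed.
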